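(* Let $m_0<m$ be the number of true null hypotheses (i.e. $m_0=\#\{i:d^t_i=0\}$), and assume $m_0\ge1$. For the additive-loss procedure with constant threshold $\beta$ (decisions $\hat d_i=I(v_{in}>\beta)$), let $pBFDR_\beta$ be its $pBFDR$. Then for any $0<\alpha<m_0/m$ there exists a sequence $\beta_n\to0$ as $n\to\infty$ such that $\lim_{n\to\infty}pBFDR_{\beta_n}=\alpha$.
   Context: Data and models: $\mathbf X_n=(X_1,\ldots,X_n)$ are the first $n$ coordinates of a process with true distribution $P$; $p(\mathbf X_n)$ is the true joint density and $f_{\boldsymbol\theta}(\mathbf X_n)$ the postulated density for $\boldsymbol\theta=(\theta_1,\ldots,\theta_M)\in\boldsymbol\Theta=\Theta_1\times\cdots\times\Theta_M$ ($M\le\infty$). $\pi$ is a prior, $\pi(\cdot\mid\mathbf X_n)$ the posterior; $E_{\mathbf X_n}$ is expectation over the data under $P$. For $i=1,\ldots,m$ ($m$ finite) one tests $H_{0i}:\theta_i\in\Theta_{0i}$ vs $H_{1i}:\theta_i\in\Theta_{1i}$ with $\Theta_{0i}\cap\Theta_{1i}=\emptyset$, $\Theta_{0i}\cup\Theta_{1i}=\Theta_i$. Decision configurations $\mathbf d\in\mathbb D=\{0,1\}^m$ ($d_i=1$: reject $H_{0i}$); $\mathbf 0$ is the all-zero configuration. KL quantities: $h(\boldsymbol\theta)=\lim_n n^{-1}E_P[\log(p/f_{\boldsymbol\theta})(\mathbf X_n)]$, $J(\boldsymbol\theta)=h(\boldsymbol\theta)-h(\boldsymbol\Theta)$ where $h(A)=\pi\text{-}\operatorname{ess\,inf}_A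 h$, and $J(A)=\pi\text{-}\operatorname{ess\,inf}_A J$. The true configuration $\mathbf d^t$ is the unique $\mathbf d$ with $J(\prod_{i\le m}\Theta_{d_ii}\times\prod_{i>m}\Theta_i)=J(\boldsymbol\Theta)$, where $\Theta_{d_ii}$ is $\Theta_{0i}$ or $\Theta_{1i}$ according as $d_i=0$ or $1$. Let $\Upsilon_{ki}=\{\boldsymbol\theta:\theta_i\in\Theta_{ki}\}$, $J(H_{ki})=J(\Upsilon_{ki})$ and $v_{in}=\pi(\Upsilon_{1i}\mid\mathbf X_n)$. Standing assumption (conclusion of Shalizi's (2009) theorem under his conditions (S1)–(S7), assumed throughout): for all $i,k$, $\pi(\Upsilon_{ki})>0$ and $\lim_n n^{-1}\log\pi(\Upsilon_{ki}\mid\mathbf X_n)=-J(\Upsilon_{ki})$ a.s.; $J(H_{1i})>0$ if $d^t_i=0$ and $J(H_{0i})>0$ if $d^t_i=1$. Error measures for a procedure with decision indicator $\delta$: $FDR_{\mathbf X_n}=\sum_{\mathbf d}\frac{\sum_i d_i(1-v_{in})}{(\sum_i d_i)\vee1}\delta(\mathbf d\mid\mathbf X_n)$, $pBFDR=E_{\mathbf X_n}[FDR_{\mathbf X_n}\mid\delta(\mathbf 0\mid\mathbf X_n)=0]$. Known fact used (Chandra and Bhattacharya 2017): for each $n$, $\beta\mapsto pBFDR_\beta$ is continuous and non-increasing on $[0,1]$. *)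

From HB Require Import structures.
From mathcomp Require Import all_boot all_order all_algebra.
From mathcomp Require Import all_classical all_reals all_analysis.
Set Implicit Arguments. Unset Strict Implicit. Unset Printing Implicit Defensive.
Import Order.TTheory GRing.Theory Num.Theory.
Local Open Scope classical_set_scope.
Local Open Scope ring_scope.

(* Decision configurations d in {0,1}^m, d i = true means "reject H_{0i}". *)
Definition config (m : nat) := {ffun 'I_m -> bool}.

(* FDR_{X_n} for a decision rule delta(.|X_n), given posterior
   probabilities v_i = pi(Upsilon_{1i} | X_n):
   sum_d [ sum_i d_i (1 - v_i) / ((sum_i d_i) \/ 1) ] delta(d | X_n). *)
Definition FDRX {R : realType} (m : nat) (v : 'I_m -> R)
  (delta : config m -> R) : R :=
  \sum_(d : config m)
     ((\sum_(i < m) (d i)%:R * (1 - v i)) / (maxn (\sum_(i < m) d i) 1)%:R)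
       * delta d.

Definition config0 (m : nat) : config m := [ffun => false].

Definition dhat {R : realType} (m : nat) (beta : R) (v : 'I_m -> R) : config m :=
  [ffun i => beta < v i].

Definition delta_beta {R : realType} (m : nat) (beta : R) (v : 'I_m -> R)
  (d : config m) : R := (d == dhat beta v)%:R.

(* pBFDR = E[ FDR_{X_n} | delta(0 | X_n) = 0 ]
         = E[ FDR_{X_n} 1{delta(0|X_n)=0} ] / P(delta(0|X_n) = 0),
   where v n i w is the posterior probability v_{in} computed from the
   data X_n(w). *)
Definition pBFDR {R : realType} {dT : measure_display} {Omega : measurableType dT}
  (P : probability Omega R) (m : nat) (v : nat -> 'I_m -> Omega -> R)
  (n : nat) (beta : R) : R :=
  let A := [set w | delta_beta beta (fun i => v n i w) (config0 m) = 0] in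
  fine (\int[P]_(w in A) (FDRX (fun i => v n i w) (delta_beta beta (fun i => v n i w)))%:E)
  / fine (P A).

From HB Require Import structures.
From mathcomp Require Import all_boot all_order all_algebra.
From mathcomp Require Import all_classical all_reals all_analysis.
From mathcomp Require Import measurable_realfun lra.
Import Order.TTheory GRing.Theory Num.Theory.
Import numFieldNormedType.Exports.
Local Open Scope classical_set_scope.
Local Open Scope ring_scope.

(* Along almost every data path the Shalizi rates make the posterior mass of
   the wrong hypothesis decay exponentially, so v_in -> d^t_i, every v_in is
   eventually positive, and for each fixed beta in (0,1) the rule
   I(v_in > beta) eventually picks d^t.  Bounded convergence then gives
   pBFDR_0 -> m0/m (everything is rejected and the posterior FDR is
   sum_i (1 - v_in) / m) and pBFDR_beta -> 0 for every beta in (0,1) (d^t is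
   picked and its posterior FDR vanishes).  As 0 < alpha < m0/m, for large n
   the intermediate value theorem yields a root beta_n <= 1/(k+2) of
   pBFDR_. = alpha for each fixed k, and a diagonal choice k = k(n) -> oo
   forces beta_n -> 0. *)

Lemma ln_rate_small_near (R : realType) (u : nat -> R) (J : R) :
  0 < J -> (fun n : nat => n%:R^-1 * ln (u n)) @ \oo --> - J ->
  forall e, 0 < e -> \forall n \near \oo, 0 < u n < e.
Proof.
move=> J0 uJ e e0; set e' := Num.min e 1.
have e'0 : 0 < e' by rewrite lt_min e0 ltr01.
have lne' : ln e' <= 0 by rewrite ln_le0 // ge_min lexx orbT.
near=> n.
have n0 : 0 < n%:R :> R by rewrite ltr0n; near: n; exact: nbhs_infty_gt.
have nJ : - 2 * ln e' / J < n%:R by near: n; exact: nbhs_infty_gtr.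
have rate : n%:R^-1 * ln (u n) < - J / 2 by near: n; apply: (cvgr_lt _ uJ); lra.
have lnu : ln (u n) < ln e'.
  have lnun : ln (u n) < n%:R * (- J / 2) by rewrite -ltr_pdivrMl.
  have : - 2 * ln e' < n%:R * J by rewrite -ltr_pdivrMr.
  lra.
have u0 : 0 < u n by rewrite ltNge; apply: contraTN lnu => /ln0 ->; rewrite -leNgt.
apply/andP; split => //; apply: (@lt_le_trans _ _ e'); last by rewrite ge_min lexx.
by rewrite -ltr_ln.
Unshelve. all: by end_near. Qed.

Lemma near_diagonal (Q : nat -> nat -> Prop) :
  (forall k, \forall n \near \oo, Q n k) ->
  exists K : nat -> nat, K @ \oo --> \oo /\ \forall n \near \oo, Q n (K n).
Proof.
move=> HQ; exists (fun n => \max_(k < n.+1 | `[< Q n k >]) (k : nat))%N.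
have near_ge k : \forall n \near \oo, (k <= \max_(k < n.+1 | `[< Q n k >]) k)%N.
  near=> n.
  have kn : (k < n.+1)%N by rewrite ltnS; near: n; exact: nbhs_infty_ge.
  have Qnk : Q n k by near: n; exact: HQ.
  by apply: (leq_bigmax_cond (Ordinal kn)); exact/asboolP.
split; first by apply/cvgnyPge => k; exact: near_ge.
near=> n.
have : (0 < #|(fun k : 'I_n.+1 => `[< Q n k >])|)%N.
  by apply/card_gt0P; exists ord0; rewrite /in_mem /=; apply/asboolP; near: n; exact: HQ.
by move=> /(eq_bigmax_cond (fun k : 'I_n.+1 => k : nat))[k /asboolP Qk ->].
Unshelve. all: by end_near. Qed.

Lemma diagonal_ivt (R : realType) (f : nat -> R -> R) (alpha : R) :
  (forall n, {within `[0, 1], continuous (f n)}) ->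
  (\forall n \near \oo, alpha < f n 0) ->
  (forall b, 0 < b < 1 -> \forall n \near \oo, f n b < alpha) ->
  exists beta : nat -> R, (forall n, 0 <= beta n <= 1) /\
    beta @ \oo --> 0 /\ (fun n => f n (beta n)) @ \oo --> alpha.
Proof.
move=> fc f0 fb; pose b k : R := harmonic k.+1.
have b01 k : 0 < b k < 1 by rewrite /b /= invr_gt0 ltr0n invf_lt1 ?ltr1n.
have b_le k : b k <= harmonic k by rewrite /b /= lef_pV2 ?posrE ?ltr0n ?ler_nat.
pose Q n k := alpha < f n 0 /\ f n (b k) < alpha.
have [K [Koo QK]] : exists K : nat -> nat, K @ \oo --> \oo /\ \forall n \near \oo, Q n (K n).
  by apply: near_diagonal => k; apply: filterS2 f0 (fb _ (b01 k)).
have root n : exists c, 0 <= c <= 1 /\ (Q n (K n) -> c <= b (K n) /\ f n c = alpha).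
  have [[fn0 fnb]|nQ] := pselect (Q n (K n)); last first.
    by exists 0; rewrite lexx ler01; split => // /nQ.
  have /andP[bK0 bK1] := b01 (K n).
  have [||c] := @IVT R (f n) 0 (b (K n)) alpha (ltW bK0).
  - apply: continuous_subspaceW (fc n) => x /=; rewrite !in_itv /= => /andP[-> xb].
    by rewrite (le_trans xb (ltW bK1)).
  - by rewrite ge_min le_max (ltW fn0) (ltW fnb) orbT.
  rewrite in_itv /= => /andP[c0 cb] fc_alpha.
  by exists c; rewrite c0 (le_trans cb (ltW bK1)).
have [beta hbeta] := choice root.
exists beta; split; first by move=> n; case: (hbeta n).
split.
  apply: (@squeeze_cvgr _ _ _ _ (cst 0) (harmonic \o K)); last 2 first.
  - exact: cvg_cst.
  - exact: (cvg_comp _ _ Koo (@cvg_harmonic R)).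
  near=> n; have [/andP[beta0 _] /(_ _)[]] := hbeta n; first by near: n.
  by move=> betab _; rewrite beta0 (le_trans betab (b_le _)).
apply: cvg_near_cst; near=> n.
by have [_ /(_ _)[]] := hbeta n; first by near: n.
Unshelve. all: by end_near. Qed.

Lemma bounded_convergence01 (d : measure_display) (T : measurableType d)
    (R : realType) (P : probability T R) (h : nat -> T -> R) (c : R) :
  (forall n, measurable_fun setT (h n)) -> (forall n w, 0 <= h n w <= 1) ->
  {ae P, forall w, h ^~ w @ \oo --> c} ->
  (fun n => fine (\int[P]_w (h n w)%:E)) @ \oo --> c.
Proof.
move=> mh h01 hc.
have mhE : forall n, measurable_fun setT (EFin \o h n).
  by move=> n; exact/measurable_EFinP.
have hcE : {ae P, forall w, setT w -> (fun n => (h n w)%:E) @ \oo --> (cst c%:E) w}.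
  by apply: filterS hc => w hw _; apply: cvg_EFin => //; exact: nearW.
have hb : {ae P, forall w n, setT w -> (`|(h n w)%:E| <= (cst 1%:E) w)%E}.
  by apply: aeW => w n _; have /andP[h0 h1] := h01 n w; rewrite /= lee_fin ger0_norm.
have [_ _] := dominated_convergence measurableT mhE (measurable_cst _) hcE
  (finite_measure_integrable_cst _ _ measurableT) hb.
rewrite integral_cst // [X in (_ * X)%E]probability_setT mule1.
by case/fine_cvgP.
Qed.

Definition fdp {R : fieldType} {m} (d : config m) (v : 'I_m -> R) : R :=
  (\sum_(i < m) (d i)%:R * (1 - v i)) / (maxn (\sum_(i < m) d i) 1)%:R.

Section DecisionRule.
Context {R : realType} {m : nat}.
Implicit Types (b : R) (v : 'I_m -> R) (d : config m).

Lemma FDRX_delta_beta b v : FDRX v (delta_beta b v) = fdp (dhat b v) v.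
Proof.
rewrite /FDRX (bigD1 (dhat b v)) //= [X in _ + X]big1 => [|d dNb].
  by rewrite /delta_beta eqxx mulr1 addr0.
by rewrite /delta_beta (negbTE dNb) mulr0.
Qed.

Lemma delta_beta_eq0 b v d : delta_beta b v d = 0 <-> d != dhat b v.
Proof. by rewrite /delta_beta; case: eqP => _; split => //; move/eqP; rewrite oner_eq0. Qed.

Lemma fdp_ge0_le1 d v : (forall i, 0 <= v i <= 1) -> 0 <= fdp d v <= 1.
Proof.
move=> v01; have den0 : 0 < (maxn (\sum_(i < m) d i) 1)%:R :> R.
  by rewrite ltr0n leq_max orbT.
have terms i : 0 <= (d i)%:R * (1 - v i) <= (d i)%:R.
  by have /andP[v0 v1] := v01 i; rewrite mulr_ge0 ?subr_ge0 //= ler_piMr ?gerBl.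
rewrite divr_ge0 ?sumr_ge0 ?(ltW den0) //=; last by move=> i _; case/andP: (terms i).
rewrite ler_pdivrMr // mul1r (@le_trans _ _ (\sum_(i < m) d i)%:R) //.
  by rewrite natr_sum; apply: ler_sum => i _; case/andP: (terms i).
by rewrite ler_nat leq_maxl.
Qed.

Lemma fdp_cvg d {u : nat -> 'I_m -> R} {l : 'I_m -> R} :
  (forall i, u ^~ i @ \oo --> l i) -> (fun n => fdp d (u n)) @ \oo --> fdp d l.
Proof.
move=> ul; apply: cvgM; last exact: cvg_cst.
apply: cvg_big => //; first exact: add_continuous.
by move=> i _; apply: cvgM; [exact: cvg_cst | apply: cvgB; [exact: cvg_cst | exact: ul]].
Qed.

Lemma fdp_eq0 d v : (forall i, d i -> v i = 1) -> fdp d v = 0.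
Proof.
move=> dv1; rewrite /fdp big1 ?mul0r // => i _.
by case: (boolP (d i)) => [/dv1 ->|_]; rewrite ?subrr ?mulr0 ?mul0r.
Qed.

Lemma fdp_all v : (0 < m)%N -> fdp [ffun => true] v = (\sum_(i < m) (1 - v i)) / m%:R.
Proof.
move=> m0; rewrite /fdp; congr (_ / _%:R).
  by apply: eq_bigr => i _; rewrite ffunE mul1r.
by rewrite (eq_bigr (fun=> 1%N)) => [|i _]; rewrite ?ffunE // sum1_card card_ord (maxn_idPl m0).
Qed.

End DecisionRule.

Section Measurability.
Context {R : realType} {d : measure_display} {Omega : measurableType d} {m : nat}.
Context {v : 'I_m -> Omega -> R}.
Hypothesis mv : forall i, measurable_fun setT (v i).

Lemma measurable_dhat_eq (b : R) (c : config m) :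
  measurable [set w | dhat b (v ^~ w) = c].
Proof.
rewrite (_ : [set w | _] = \bigcap_(i in [set: 'I_m]) ((fun w => b < v i w) @^-1` [set c i])).
  apply: fin_bigcap_measurable => // i _; rewrite -[X in measurable X]setTI.
  by apply: measurable_fun_ltr => //; exact: measurable_cst.
apply/seteqP; split => w /=; first by move=> <- i _; rewrite ffunE.
by move=> wc; apply/ffunP => i; rewrite ffunE; exact: wc.
Qed.

Lemma measurable_delta_beta (b : R) (c : config m) :
  measurable_fun setT (fun w => delta_beta b (v ^~ w) c).
Proof.
rewrite (_ : (fun w => _) = \1_[set w | dhat b (v ^~ w) = c]).
  exact/measurable_indic/measurable_dhat_eq.
apply/funext => w; rewrite indicE /delta_beta eq_sym.
case: eqP => cw; first by rewrite mem_set.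
by rewrite memNset.
Qed.

Lemma measurable_FDRX (b : R) :
  measurable_fun setT (fun w => FDRX (v ^~ w) (delta_beta b (v ^~ w))).
Proof.
apply: measurable_sum => c; apply: measurable_funM; last exact: measurable_delta_beta.
apply: measurable_funM; last exact: measurable_cst.
apply: measurable_sum => i; apply: measurable_funM; first exact: measurable_cst.
by apply: measurable_funB; [exact: measurable_cst | exact: mv].
Qed.

End Measurability.

Section PosteriorFDR.
Context {R : realType} {d : measure_display} {Omega : measurableType d}.
Variables (P : probability Omega R) (m : nat) (v : nat -> 'I_m -> Omega -> R).
Hypothesis mv : forall n i, measurable_fun setT (v n i).
Hypothesis v01 : forall n i w, 0 <= v n i w <= 1.

Lemma pBFDR_cvg (b L : R) :
  {ae P, forall w, \forall n \near \oo, dhat b (v n ^~ w) != config0 m} ->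
  {ae P, forall w, (fun n => fdp (dhat b (v n ^~ w)) (v n ^~ w)) @ \oo --> L} ->
  (fun n => pBFDR P v n b) @ \oo --> L.
Proof.
move=> rej fdpL.
pose A n := [set w | delta_beta b (v n ^~ w) (config0 m) = 0].
pose F n w := FDRX (v n ^~ w) (delta_beta b (v n ^~ w)).
have mA n : measurable (A n).
  have := measurable_delta_beta (mv n) b (config0 m) measurableT _ (measurable_set1 0).
  by rewrite setTI.
have A1 : {ae P, forall w, \forall n \near \oo, (\1_(A n) w : R) = 1}.
  apply: filterS rej => w; apply: filterS => n dhat0.
  by rewrite indicE mem_set //; apply/delta_beta_eq0; rewrite eq_sym.
have num : (fun n => fine (\int[P]_w (F n w * \1_(A n) w)%:E)) @ \oo --> L.
  apply: bounded_convergence01.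
  - by move=> n; apply: measurable_funM; [exact: measurable_FDRX | exact: measurable_indic].
  - move=> n w; rewrite indicE; case: (_ \in _); rewrite ?mulr0 ?lexx ?ler01 // mulr1.
    by rewrite /F FDRX_delta_beta; apply: fdp_ge0_le1.
  apply: filterS2 A1 fdpL => w wA wL; apply: cvg_trans wL; apply: near_eq_cvg.
  by apply: filterS wA => n ->; rewrite mulr1 /F FDRX_delta_beta.
have den : (fun n => fine (\int[P]_w (\1_(A n) w : R)%:E)) @ \oo --> (1 : R).
  apply: bounded_convergence01.
  - by move=> n; exact: measurable_indic.
  - by move=> n w; rewrite indicE; case: (_ \in _); rewrite ?lexx ?ler01.
  by apply: filterS A1 => w; exact: cvg_near_cst.
have : (fun n => fine (\int[P]_w (F n w * \1_(A n) w)%:E) /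
    fine (\int[P]_w (\1_(A n) w : R)%:E)) @ \oo --> L * 1^-1.
  by apply: cvgM num _; apply: cvgV den; exact: oner_neq0.
rewrite invr1 mulr1; apply: cvg_trans; apply: near_eq_cvg; apply: nearW => n /=.
apply/esym; rewrite /pBFDR integral_mkcond integral_indic ?setIT //.
congr (fine _ / _); apply: eq_integral => w _; rewrite patchE indicE.
by case: (_ \in _); rewrite ?mulr1 ?mulr0.
Qed.

End PosteriorFDR.

(* The posterior mass of the false one of H_0i, H_1i when d = d^t_i and x = v_in. *)
Definition post_wrong {R : ringType} (d : bool) (x : R) : R := if d then 1 - x else x.

Section PosteriorPath.
Context {R : realType} {m : nat}.
Variables (u : nat -> 'I_m -> R) (dt : 'I_m -> bool).
Hypothesis wrong_small : forall i e, 0 < e ->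
  \forall n \near \oo, 0 < post_wrong (dt i) (u n i) < e.

Lemma post_cvg_truth i : u ^~ i @ \oo --> ((dt i)%:R : R).
Proof.
apply/cvgrPdist_lt => e e0; near=> n.
have : 0 < post_wrong (dt i) (u n i) < e by near: n; exact: wrong_small.
by rewrite /post_wrong; case: (dt i) => /andP[w0 we]; rewrite ?sub0r ?normrN gtr0_norm.
Unshelve. all: by end_near. Qed.

Lemma alt_post_gt_near b : b < 1 -> \forall n \near \oo, forall i, dt i -> b < u n i.
Proof.
move=> b1; apply: filter_forall => i; near=> n => dti.
have : 0 < post_wrong (dt i) (u n i) < 1 - b by near: n; apply: wrong_small; lra.
by rewrite /post_wrong dti => /andP[_]; lra.
Unshelve. all: by end_near. Qed.

Lemma null_post_near b : 0 < b -> \forall n \near \oo, forall i, ~~ dt i -> 0 < u n i < b.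
Proof.
move=> b0; apply: filter_forall => i; near=> n => /negbTE ndti.
have : 0 < post_wrong (dt i) (u n i) < b by near: n; exact: wrong_small.
by rewrite /post_wrong ndti.
Unshelve. all: by end_near. Qed.

Lemma dhat0_near : \forall n \near \oo, dhat 0 (u n) = [ffun => true].
Proof.
near=> n.
have alt : forall i, dt i -> 0 < u n i by near: n; exact: alt_post_gt_near.
have null : forall i, ~~ dt i -> 0 < u n i < 1 by near: n; exact: null_post_near.
by apply/ffunP => i; rewrite !ffunE; case: (boolP (dt i)) => [/alt|/null/andP[]].
Unshelve. all: by end_near. Qed.

Lemma dhat_truth_near b : 0 < b < 1 -> \forall n \near \oo, dhat b (u n) = [ffun i => dt i].
Proof.
case/andP=> b0 b1; near=> n.
have alt : forall i, dt i -> b < u n i by near: n; exact: alt_post_gt_near.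
have null : forall i, ~~ dt i -> 0 < u n i < b by near: n; exact: null_post_near.
apply/ffunP => i; rewrite !ffunE.
by case: (boolP (dt i)) => [/alt -> //|/null/andP[_ /ltW]]; rewrite leNgt => /negbTE.
Unshelve. all: by end_near. Qed.

Lemma dhat_neq0_near b : b < 1 -> (exists i, dt i) ->
  \forall n \near \oo, dhat b (u n) != config0 m.
Proof.
move=> b1 [i dti]; near=> n.
have alt : forall i, dt i -> b < u n i by near: n; exact: alt_post_gt_near.
by apply/eqP => /ffunP/(_ i); rewrite !ffunE alt.
Unshelve. all: by end_near. Qed.

Lemma fdp_dhat0_cvg : (0 < m)%N ->
  (fun n => fdp (dhat 0 (u n)) (u n)) @ \oo --> ((\sum_(i < m) (1 - (dt i)%:R)) / m%:R : R).
Proof.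
move=> m_gt0; have := fdp_cvg [ffun => true] post_cvg_truth; rewrite fdp_all //.
apply: cvg_trans; apply: near_eq_cvg; near=> n; apply/esym; congr fdp.
by near: n; exact: dhat0_near.
Unshelve. all: by end_near. Qed.

Lemma fdp_dhat_cvg0 b : 0 < b < 1 -> (fun n => fdp (dhat b (u n)) (u n)) @ \oo --> 0.
Proof.
move=> b01; have := fdp_cvg [ffun i => dt i] post_cvg_truth.
rewrite fdp_eq0 => [|i]; last by rewrite ffunE => ->.
apply: cvg_trans; apply: near_eq_cvg; near=> n; apply/esym; congr fdp.
by near: n; exact: dhat_truth_near.
Unshelve. all: by end_near. Qed.

End PosteriorPath.

Lemma in_set_pred {T : Type} (p : pred T) x : (x \in [set x | p x]) = p x.
Proof. by apply/idP/idP => [/set_mem|/mem_set]. Qed.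

Lemma sum_subr1_card {R : ringType} m (p : 'I_m -> bool) :
  \sum_(i < m) (1 - (p i)%:R) = #|[set i | ~~ p i]|%:R :> R.
Proof.
rewrite -sum1_card natr_sum [RHS]big_mkcond /=; apply: eq_bigr => i _.
by rewrite in_set_pred; case: (p i); rewrite ?subrr ?subr0.
Qed.

Theorem theorem9 (R : realType) (dT : measure_display) (Omega : measurableType dT)
  (P : probability Omega R) (m : nat)
  (v : nat -> 'I_m -> Omega -> R)        (* v n i w = pi(Upsilon_{1i} | X_n(w)) *)
  (dt : 'I_m -> bool)                      (* true configuration d^t *)
  (J : bool -> 'I_m -> R)                  (* J k i = J(Upsilon_{ki}) = J(H_{ki}) *)
  (Hmeas : forall n i, measurable_fun setT (v n i))
  (Hv01 : forall n i w, 0 <= v n i w <= 1)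
  (* standing assumption (Shalizi): a.s. n^{-1} log pi(Upsilon_{ki}|X_n) -> -J(Upsilon_{ki}),
     with pi(Upsilon_{1i}|X_n) = v_{in} and pi(Upsilon_{0i}|X_n) = 1 - v_{in} *)
  (HJ1 : forall i, {ae P, forall w,
      (fun n : nat => n%:R^-1 * ln (v n i w)) @ \oo --> - J true i})
  (HJ0 : forall i, {ae P, forall w,
      (fun n : nat => n%:R^-1 * ln (1 - v n i w)) @ \oo --> - J false i})
  (HJtrue : forall i, J (dt i) i = 0)
  (HJnull : forall i, dt i = false -> 0 < J true i)
  (HJalt : forall i, dt i = true -> 0 < J false i)
  (* known fact (Chandra and Bhattacharya 2017) *)
  (Hcont : forall n, {within `[(0:R), 1], continuous (pBFDR P v n)})
  (Hmono : forall n, {in `[(0:R), (1:R)] &, forall a b : R, a <= b -> pBFDR P v n b <= pBFDR P v n a})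
  (m0 : nat) (Hm0 : m0 = #|[set i | ~~ dt i]|)
  (Hm0pos : (1 <= m0)%N) (Hm0m : (m0 < m)%N) :
  forall alpha : R, 0 < alpha -> alpha < m0%:R / m%:R ->
  exists beta : nat -> R,
    (forall n, 0 <= beta n <= 1) /\
    beta @ \oo --> 0 /\
    (fun n => pBFDR P v n (beta n)) @ \oo --> alpha.
Proof.
move=> alpha alpha0 alpha_lt.
have m_gt0 : (0 < m)%N by apply: leq_ltn_trans Hm0m.
have alt_exists : exists i, dt i.
  apply/existsP; apply: contraLR Hm0m; rewrite negb_exists => /forallP nalt.
  rewrite Hm0 -leqNgt (@eq_card _ _ 'I_m) ?card_ord // => i.
  by rewrite in_set_pred nalt.
have wrong_small : {ae P, forall w, forall i e, 0 < e ->
    \forall n \near \oo, 0 < post_wrong (dt i) (v n i w) < e}.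
  apply: filter_forall => i; apply: filterS2 (HJ1 i) (HJ0 i) => w rate1 rate0.
  rewrite /post_wrong; case: (boolP (dt i)) => [/HJalt|/negbTE/HJnull] J0.
  - exact: ln_rate_small_near J0 rate0.
  - exact: ln_rate_small_near J0 rate1.
have lim0 : (fun n => pBFDR P v n 0) @ \oo --> (m0%:R / m%:R : R).
  rewrite Hm0 -sum_subr1_card; apply: pBFDR_cvg => //.
  - by apply: filterS wrong_small => w ws; exact: dhat_neq0_near ltr01 alt_exists.
  - by apply: filterS wrong_small => w ws; exact: fdp_dhat0_cvg.
have limb b : 0 < b < 1 -> (fun n => pBFDR P v n b) @ \oo --> 0.
  move=> b01; apply: pBFDR_cvg => //.
  - by apply: filterS wrong_small => w ws; apply: dhat_neq0_near alt_exists; case/andP: b01.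
  - by apply: filterS wrong_small => w ws; exact: fdp_dhat_cvg0 ws _ b01.
apply: diagonal_ivt Hcont (cvgr_gt _ lim0 _ alpha_lt) _ => b b01.
exact: cvgr_lt _ (limb b b01) _ alpha0.
Qed.
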